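(* Let $f:\mathbb{N}\to\mathbb{R}$ with $f(1)=1$. Assume $f(n)=0$ for all even $n$ and there exist $C>0$ and $\gamma\in\mathbb{R}$ such that $|f(n)|\leq Cn^\gamma$ for all $n\geq2$. Then $$|f^{-1}(n)|\leq n^{\gamma+\varsigma}, \quad n\geq2,$$ where $\varsigma>1$ is the unique root of $\left(1-2^{-s}\right)\zeta(s)=\frac{1}{C}+1$. In particular, if $C=1$, then $\varsigma=\eta=1.37779\dots$
   Context: $f^{-1}$ denotes the Dirichlet inverse of $f$: the arithmetic function with $\sum_{d\mid n} f(n/d) f^{-1}(d)=\varepsilon(n)$ for all $n$, where $\varepsilon(1)=1$ and $\varepsilon(n)=0$ for $n\ge2$. $\zeta$ is the Riemann zeta function. *)

From mathcomp Require Import all_boot all_order all_algebra.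
From mathcomp Require Import all_classical all_reals all_analysis.
Set Implicit Arguments. Unset Strict Implicit. Unset Printing Implicit Defensive.
Import Order.TTheory GRing.Theory Num.Theory.
Local Open Scope ring_scope.

Definition dir_eps (R : realType) (n : nat) : R := if n == 1%N then 1 else 0.

Definition is_dirichlet_inverse (R : realType) (f g : nat -> R) : Prop :=
  forall n : nat, (0 < n)%N ->
    \sum_(d <- divisors n) f (n %/ d)%N * g d = dir_eps R n.

(* Riemann zeta function on reals: zeta s = sum_{k >= 1} k^{-s}
   (limit of partial sums; meaningful for s > 1) *)
Definition zeta (R : realType) (s : R) : R :=
  limn (fun N : nat => \sum_(1 <= k < N) (k%:R `^ (- s))).

From mathcomp Require Import all_boot all_order all_algebra.
From mathcomp Require Import all_classical all_reals all_analysis.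
From mathcomp Require Import ring lra.
Set Implicit Arguments. Unset Strict Implicit. Unset Printing Implicit Defensive.
Import Order.TTheory GRing.Theory Num.Theory.
Import numFieldNormedType.Exports.
Local Open Scope classical_set_scope.
Local Open Scope ring_scope.

(* For s > 1, (1 - 2^-s) zeta(s) is the sum of k^-s over odd k.  Comparing
   k^-s with the integral of x^-s gives
   1/(4(s-1)) <= (1 - 2^-s) zeta(s) <= 1 + 1/(s-1), and as a sum of the
   decreasing functions s |-> k^-s it is strictly decreasing and locally
   Lipschitz; so it takes every value c > 1 exactly once.

   For the bound on g = f^-1, isolating the term d = n of the defining
   identity gives g(n) = - sum_(d | n, d < n) f(n/d) g(d).  By strong induction,
   |f(n/d) g(d)| <= C (n/d)^gamma d^(gamma+s) = C n^(gamma+s) (n/d)^-s, and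
   f vanishes at even n/d, so |g(n)| <= n^(gamma+s) C sum_(k odd, k > 1) k^-s,
   where C sum_(k odd, k > 1) k^-s = C ((1 - 2^-s) zeta(s) - 1) = 1 at the
   root s. *)

Section PowerBounds.
Context {R : realType}.

Lemma powR_expR (u r : R) : 0 < u -> u `^ r = expR (r * ln u).
Proof. by move=> u0; rewrite /powR gt_eqF. Qed.

Lemma expR_sub_le (u v : R) : expR u - expR v <= (u - v) * expR u.
Proof.
have := expR_ge1Dx (v - u); rewrite expRB => h.
rewrite -(ler_pM2r (expR_gt0 u)) mulfVK ?gt_eqF ?expR_gt0 // mulrDl mul1r in h.
rewrite mulrBl; lra.
Qed.

Lemma lnB_le (x y : R) : 0 < x -> 0 < y -> ln x - ln y <= (x - y) / y.
Proof.
move=> x0 y0; have := expR_ge1Dx (ln x - ln y).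
rewrite expRB !lnK ?posrE // mulrBl divff ?gt_eqF //; lra.
Qed.

Lemma powRN1D (u r : R) : 0 < u -> u `^ (- (1 + r)) = u `^ (- r) / u.
Proof.
move=> u0; rewrite opprD powRD ?(gt_eqF u0) ?implybT //.
by rewrite powR_inv1 ?ltW // mulrC.
Qed.

Lemma powRN_sub_le (a u v : R) : 0 < a -> 0 < u -> u <= v ->
  u `^ (- a) - v `^ (- a) <= a * (v - u) * u `^ (- (1 + a)).
Proof.
move=> a0 u0 uv; have v0 := lt_le_trans u0 uv.
rewrite powRN1D // !powR_expR //.
apply: (le_trans (expR_sub_le _ _)).
have -> : - a * ln u - - a * ln v = a * (ln v - ln u) by ring.
have -> : a * (v - u) * (expR (- a * ln u) / u) = a * ((v - u) / u) * expR (- a * ln u).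
  by ring.
by rewrite ler_pM2r ?expR_gt0 // ler_pM2l // lnB_le.
Qed.

Lemma powRN_sub_ge (a u v : R) : 0 < a -> 0 < u -> u <= v ->
  a * (v - u) * v `^ (- (1 + a)) <= u `^ (- a) - v `^ (- a).
Proof.
move=> a0 u0 uv; have v0 := lt_le_trans u0 uv.
rewrite powRN1D // !powR_expR //.
rewrite -lerN2 opprB; apply: (le_trans (expR_sub_le _ _)).
have -> : - a * ln v - - a * ln u = a * (ln u - ln v) by ring.
have -> : - (a * (v - u) * (expR (- a * ln v) / v)) = a * ((u - v) / v) * expR (- a * ln v).
  by ring.
by rewrite ler_pM2r ?expR_gt0 // ler_pM2l // lnB_le.
Qed.

(* The factor [ln u] coming from the derivative in the exponent is absorbed by
   [ln u <= u `^ b / b], at the cost of [b] in the exponent. *)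
Lemma powRN_sub_le_exponent (b x y u : R) : 0 < b -> 1 <= u -> 1 + 2 * b <= x -> x <= y ->
  u `^ (- x) - u `^ (- y) <= (y - x) / b * u `^ (- (1 + b)).
Proof.
move=> b0 u1 xb xy; have u0 := lt_le_trans ltr01 u1.
rewrite !powR_expR //; set l := ln u.
have l0 : 0 <= l by exact: ln_ge0.
have l_le : l <= expR (b * l) / b.
  by rewrite ler_pdivlMr // mulrC; have := expR_ge1Dx (b * l); lra.
have expR_le : expR (- x * l) <= expR (- (1 + 2 * b) * l).
  by rewrite ler_expR !mulNr lerN2; apply: ler_wpM2r.
apply: (le_trans (expR_sub_le _ _)).
have -> : - x * l - - y * l = (y - x) * l by ring.
have -> : (y - x) / b * expR (- (1 + b) * l) =
    (y - x) * (expR (b * l) / b) * expR (- (1 + 2 * b) * l).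
  have -> : - (1 + b) * l = b * l + - (1 + 2 * b) * l by ring.
  by rewrite expRD; ring.
apply: ler_pM.
- by rewrite mulr_ge0 // subr_ge0.
- exact: expR_ge0.
- by apply: ler_wpM2l; rewrite // subr_ge0.
- exact: expR_le.
Qed.

End PowerBounds.

Lemma cvgn_double (T : topologicalType) (u : T ^nat) (l : T) :
  u @ \oo --> l -> (fun n => u n.*2) @ \oo --> l.
Proof.
move=> ul; apply: cvg_comp ul.
have -> : double = muln^~ 2%N by apply: funext => n; rewrite muln2.
exact: cvg_mulnr.
Qed.

Section ZetaPartialSums.
Context {R : realType}.

Definition zeta_term (s : R) (k : nat) : R := k%:R `^ (- s).

(* The junk term [k = 0] is [0 `^ (- s)], which vanishes only for [s != 0]. *)
Definition zeta_partial (s : R) (N : nat) : R := \sum_(k < N) zeta_term s k.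

Lemma zeta_term_ge0 s k : 0 <= zeta_term s k.
Proof. exact: powR_ge0. Qed.

Lemma zeta_term0 s : s != 0 -> zeta_term s 0 = 0.
Proof. by move=> s0; rewrite /zeta_term powR0 // oppr_eq0. Qed.

Lemma zeta_term1 s : zeta_term s 1 = 1.
Proof. by rewrite /zeta_term powR1. Qed.

Lemma zeta_term_double s k : zeta_term s k.*2 = 2 `^ (- s) * zeta_term s k.
Proof. by rewrite /zeta_term -muln2 natrM powRM // mulrC. Qed.

Lemma zeta_term_subS_bounds a m : 0 < a -> (0 < m)%N ->
  a * zeta_term (1 + a) m.+1 <= zeta_term a m - zeta_term a m.+1 <= a * zeta_term (1 + a) m.
Proof.
move=> a0 m0; have m_gt0 : 0 < (m%:R : R) by rewrite ltr0n.
have m_le : (m%:R : R) <= m.+1%:R by rewrite ler_nat.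
have m_diff : (m.+1%:R - m%:R : R) = 1 by rewrite -natr1 addrAC subrr add0r.
have := powRN_sub_ge a0 m_gt0 m_le; have := powRN_sub_le a0 m_gt0 m_le.
by rewrite m_diff mulr1 /zeta_term => -> ->.
Qed.

Lemma zeta_partialS s N : zeta_partial s N.+1 = zeta_partial s N + zeta_term s N.
Proof. by rewrite /zeta_partial big_ord_recr. Qed.

Lemma zeta_partial_nondecreasing s : nondecreasing_seq (zeta_partial s).
Proof. by apply/nondecreasing_seqP => N; rewrite zeta_partialS lerDl zeta_term_ge0. Qed.

(* Telescoping [zeta_term_subS_bounds]: a discrete form of
   [1 <= a * zeta (1 + a) <= a + 1]. *)
Lemma zeta_partial_telescope a N : 0 < a ->
  1 <= a * zeta_partial (1 + a) N.+1 + zeta_term a N.+1 /\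
  a * zeta_partial (1 + a) N.+2 + zeta_term a N.+1 <= a + 1.
Proof.
move=> a0; have s0 : 1 + a != 0 by apply: lt0r_neq0; lra.
elim: N => [|N [IHge IHle]].
  by rewrite /zeta_partial !big_ord_recr big_ord0 /= zeta_term0 // !zeta_term1; split; lra.
have /andP[] := zeta_term_subS_bounds a0 (ltn0Sn N).
rewrite !zeta_partialS in IHge IHle *; split; lra.
Qed.

Lemma zeta_partial_le s N : 1 < s -> zeta_partial s N <= 1 + (s - 1)^-1.
Proof.
move=> s1; set a := s - 1; have a0 : 0 < a by rewrite subr_gt0.
have -> : s = 1 + a by rewrite /a; ring.
have [_ tele] := zeta_partial_telescope N a0.
have mono : a * zeta_partial (1 + a) N <= a * zeta_partial (1 + a) N.+2.
  by rewrite ler_pM2l //; apply: zeta_partial_nondecreasing; rewrite leqW.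
have term_ge0 := zeta_term_ge0 a N.+1.
rewrite -(ler_pM2l a0) mulrDr mulr1 mulfV ?gt_eqF //; lra.
Qed.

Lemma zetaE s : s != 0 -> zeta s = limn (zeta_partial s).
Proof.
move=> s0; rewrite /zeta.
suff -> : (fun N : nat => \sum_(1 <= k < N) k%:R `^ (- s)) = zeta_partial s by [].
apply: funext => -[|N]; first by rewrite /zeta_partial big_ord0 big_geq.
rewrite /zeta_partial -(big_mkord xpredT (zeta_term s)) (big_ltn (ltn0Sn N)).
by rewrite zeta_term0 // add0r.
Qed.

Lemma zeta_partial_cvg s : 1 < s -> zeta_partial s @ \oo --> zeta s.
Proof.
move=> s1; rewrite zetaE ?gt_eqF ?(lt_trans ltr01) //.
apply: nondecreasing_is_cvgn; first exact: zeta_partial_nondecreasing.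
by exists (1 + (s - 1)^-1) => _ [N _ <-]; exact: zeta_partial_le.
Qed.

Lemma zeta_partial_le_zeta s N : 1 < s -> zeta_partial s N <= zeta s.
Proof.
move=> s1; have zs := zeta_partial_cvg s1; rewrite -(cvg_lim _ zs) //.
exact: nondecreasing_cvgn_le (zeta_partial_nondecreasing s) (cvgP _ zs) N.
Qed.

End ZetaPartialSums.

Section OddZeta.
Context {R : realType}.

Definition odd_zeta_term (s : R) (k : nat) : R := if odd k then zeta_term s k else 0.

Definition odd_zeta_partial (s : R) (N : nat) : R := \sum_(k < N) odd_zeta_term s k.

Definition odd_zeta (s : R) : R := (1 - 2 `^ (- s)) * zeta s.

Lemma odd_zeta_term_ge0 s k : 0 <= odd_zeta_term s k.
Proof. by rewrite /odd_zeta_term; case: ifP => // _; exact: zeta_term_ge0. Qed.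

Lemma odd_zeta_term_le s k : odd_zeta_term s k <= zeta_term s k.
Proof. by rewrite /odd_zeta_term; case: ifP => // _; exact: zeta_term_ge0. Qed.

Lemma odd_zeta_partialS s N :
  odd_zeta_partial s N.+1 = odd_zeta_partial s N + odd_zeta_term s N.
Proof. by rewrite /odd_zeta_partial big_ord_recr. Qed.

Lemma odd_zeta_partial_nondecreasing s : nondecreasing_seq (odd_zeta_partial s).
Proof.
by apply/nondecreasing_seqP => N; rewrite odd_zeta_partialS lerDl odd_zeta_term_ge0.
Qed.

Lemma odd_zeta_partial_le s N : 1 < s -> odd_zeta_partial s N <= 1 + (s - 1)^-1.
Proof.
move=> s1; apply: le_trans (zeta_partial_le N s1).
by apply: ler_sum => k _; exact: odd_zeta_term_le.
Qed.

Lemma odd_zeta_partial_double s N :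
  odd_zeta_partial s N.*2 = zeta_partial s N.*2 - 2 `^ (- s) * zeta_partial s N.
Proof.
elim: N => [|N IH]; first by rewrite /odd_zeta_partial /zeta_partial !big_ord0 mulr0 subr0.
rewrite doubleS !odd_zeta_partialS !zeta_partialS IH /odd_zeta_term /= odd_double /=.
by rewrite zeta_term_double; ring.
Qed.

Lemma odd_zeta_partial_tail s N : (1 < N)%N ->
  1 + \sum_(2 <= k < N) odd_zeta_term s k = odd_zeta_partial s N.
Proof.
case: N => [|[|N]] // _.
rewrite /odd_zeta_partial -(big_mkord xpredT) (big_ltn (ltn0Sn _)) (big_ltn (isT : (1 < N.+2)%N)).
by rewrite /odd_zeta_term /= zeta_term1 add0r.
Qed.

Lemma odd_zeta_partial_cvg s : 1 < s -> odd_zeta_partial s @ \oo --> odd_zeta s.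
Proof.
move=> s1; have Q_cvg : cvgn (odd_zeta_partial s).
  apply: nondecreasing_is_cvgn; first exact: odd_zeta_partial_nondecreasing.
  by exists (1 + (s - 1)^-1) => _ [N _ <-]; exact: odd_zeta_partial_le.
have Q2_cvg : (fun N => odd_zeta_partial s N.*2) @ \oo --> odd_zeta s.
  under eq_fun do rewrite odd_zeta_partial_double.
  rewrite /odd_zeta mulrBl mul1r.
  exact: cvgB (cvgn_double (zeta_partial_cvg s1)) (cvgMl_tmp (zeta_partial_cvg s1)).
by rewrite -(cvg_lim _ Q2_cvg) // (cvg_lim _ (cvgn_double Q_cvg)).
Qed.

Lemma odd_zeta_partial_le_odd_zeta s N : 1 < s -> odd_zeta_partial s N <= odd_zeta s.
Proof.
move=> s1; have Qs := odd_zeta_partial_cvg s1; rewrite -(cvg_lim _ Qs) //.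
exact: nondecreasing_cvgn_le (odd_zeta_partial_nondecreasing s) (cvgP _ Qs) N.
Qed.

Lemma odd_zeta_tail_le s N : 1 < s -> \sum_(2 <= k < N) odd_zeta_term s k <= odd_zeta s - 1.
Proof.
move=> s1; rewrite lerBrDl; have [N_le1|N_gt1] := leqP N 1.
  rewrite big_geq ?(leq_trans N_le1) // addr0.
  apply: le_trans (odd_zeta_partial_le_odd_zeta 2 s1).
  by rewrite -(odd_zeta_partial_tail s (ltnSn 1)) big_geq // addr0.
by rewrite odd_zeta_partial_tail // odd_zeta_partial_le_odd_zeta.
Qed.

Lemma odd_zeta_le s : 1 < s -> odd_zeta s <= 1 + (s - 1)^-1.
Proof.
move=> s1; apply: cvgr_to_le (odd_zeta_partial_cvg s1) _.
exact: nearW (fun N => odd_zeta_partial_le N s1).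
Qed.

Lemma powR2N_le_half (x : R) : 1 <= x -> 2 `^ (- x) <= 2^-1.
Proof.
move=> x1; rewrite -(@powR_inv1 R 2) //.
by apply: (ler_powR (a := 2)); rewrite ?lerN2 //; lra.
Qed.

Lemma zeta_term_le_half (a : R) : 0 < a -> exists2 m, (0 < m)%N & zeta_term a m <= 2^-1.
Proof.
move=> a0; set k := (Num.truncn a^-1).+1.
exists (2 ^ k)%N; first by rewrite expn_gt0.
rewrite /zeta_term natrX -powR_mulrn // -powRrM mulrN; apply: powR2N_le_half.
rewrite -ler_pdivrMr // div1r; apply: ltW.
have ai : 0 <= a^-1 by rewrite invr_ge0 ltW.
by have /andP[] := truncn_itv ai.
Qed.

Lemma zeta_ge (a : R) : 0 < a -> (2 * a)^-1 <= zeta (1 + a).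
Proof.
move=> a0; have [m m0 m_half] := zeta_term_le_half a0.
have [tele _] := zeta_partial_telescope m.-1 a0; rewrite prednK // in tele.
apply: le_trans (zeta_partial_le_zeta m _); last by rewrite ltrDl.
by rewrite invfM ler_pdivrMr // mulrC; lra.
Qed.

Lemma odd_zeta_unbounded (c : R) : 0 < c -> exists2 s, 1 < s & c <= odd_zeta s.
Proof.
move=> c0; set a := (4 * c)^-1; have a0 : 0 < a by rewrite invr_gt0 mulr_gt0.
exists (1 + a); first by rewrite ltrDl.
have -> : c = 2^-1 * (2 * a)^-1 by rewrite /a; field; rewrite lt0r_neq0.
have half : 2 `^ (- (1 + a)) <= 2^-1 by apply: powR2N_le_half; rewrite lerDl ltW.
apply: ler_pM; [by rewrite invr_ge0 | by rewrite invr_ge0 mulr_ge0 // ltW | lra |].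
exact: zeta_ge.
Qed.

Lemma odd_zeta_term_nonincreasing k (x y : R) : x <= y -> odd_zeta_term y k <= odd_zeta_term x k.
Proof.
move=> xy; rewrite /odd_zeta_term; case: ifP => // k_odd.
by apply: ler_powR; rewrite ?lerN2 // ler1n odd_gt0.
Qed.

Lemma odd_zeta_term_sub_le k (b x y : R) : 0 < b -> 1 + 2 * b <= x -> x <= y ->
  odd_zeta_term x k - odd_zeta_term y k <= (y - x) / b * zeta_term (1 + b) k.
Proof.
move=> b0 xb xy; rewrite /odd_zeta_term; case: ifP => k_odd.
  by apply: powRN_sub_le_exponent; rewrite // ler1n odd_gt0.
by rewrite subrr mulr_ge0 ?zeta_term_ge0 // divr_ge0 ?subr_ge0 // ltW.
Qed.

Lemma odd_zeta_partial_sub_nondecreasing (x y : R) : x <= y ->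
  nondecreasing_seq (fun N => odd_zeta_partial x N - odd_zeta_partial y N).
Proof.
move=> xy; apply/nondecreasing_seqP => N.
rewrite !odd_zeta_partialS opprD addrACA lerDl subr_ge0.
exact: odd_zeta_term_nonincreasing.
Qed.

Lemma odd_zeta_sub_cvg (x y : R) : 1 < x -> 1 < y ->
  (fun N => odd_zeta_partial x N - odd_zeta_partial y N) @ \oo --> odd_zeta x - odd_zeta y.
Proof. by move=> x1 y1; apply: cvgB; exact: odd_zeta_partial_cvg. Qed.

(* The differences of partial sums increase, and the one up to [k = 3] is
   already [3 `^ (- x) - 3 `^ (- y) > 0]. *)
Lemma odd_zeta_lt (x y : R) : 1 < x -> x < y -> odd_zeta y < odd_zeta x.
Proof.
move=> x1 xy; have D := odd_zeta_sub_cvg x1 (lt_trans x1 xy).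
have := nondecreasing_cvgn_le (odd_zeta_partial_sub_nondecreasing (ltW xy)) (cvgP _ D) 4.
rewrite (cvg_lim _ D) // -subr_gt0; apply: lt_le_trans.
rewrite /odd_zeta_partial !big_ord_recr !big_ord0 /odd_zeta_term /= !zeta_term1.
have : zeta_term y 3 < zeta_term x 3.
  by rewrite /zeta_term !powR_expR // ltr_expR ltr_pM2r ?ln_gt0 ?ltr1n // ltrN2.
lra.
Qed.

Lemma odd_zeta_sub_le (b x y : R) : 0 < b -> 1 + 2 * b <= x -> x <= y ->
  odd_zeta x - odd_zeta y <= (y - x) / b * (1 + b^-1).
Proof.
move=> b0 xb xy; have x1 : 1 < x by apply: lt_le_trans xb; rewrite ltrDl mulr_gt0.
apply: cvgr_to_le (odd_zeta_sub_cvg x1 (lt_le_trans x1 xy)) _; apply: nearW => N.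
rewrite /odd_zeta_partial -sumrB.
apply: (@le_trans _ _ (\sum_(k < N) (y - x) / b * zeta_term (1 + b) k)).
  by apply: ler_sum => k _; exact: odd_zeta_term_sub_le.
rewrite -mulr_sumr; apply: ler_wpM2l; first by rewrite divr_ge0 ?subr_ge0 // ltW.
have -> : b^-1 = (1 + b - 1)^-1 by rewrite addrAC subrr add0r.
by apply: zeta_partial_le; rewrite ltrDl.
Qed.

Lemma odd_zeta_dist_le (b x y : R) : 0 < b -> 1 + 2 * b <= x -> 1 + 2 * b <= y ->
  `|odd_zeta x - odd_zeta y| <= (1 + b^-1) / b * `|x - y|.
Proof.
move=> b0; wlog xy : x y / x <= y.
  move=> le_case xb yb; have [xy|/ltW yx] := leP x y; first exact: le_case.
  by rewrite distrC (distrC x); exact: le_case.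
move=> xb yb; have x1 : 1 < x by apply: lt_le_trans xb; rewrite ltrDl mulr_gt0.
have O_le : odd_zeta y <= odd_zeta x.
  have [->//|x_neq_y] := eqVneq x y.
  by apply/ltW/(odd_zeta_lt x1); rewrite lt_neqAle x_neq_y xy.
rewrite ger0_norm ?subr_ge0 // distrC ger0_norm ?subr_ge0 //.
have -> : (1 + b^-1) / b * (y - x) = (y - x) / b * (1 + b^-1) by ring.
exact: odd_zeta_sub_le.
Qed.

Lemma odd_zeta_continuous (x : R) : 1 < x -> {for x, continuous odd_zeta}.
Proof.
(* [b] is chosen so that the whole ball of radius [2 * b] around [x] lies in
   [[1 + 2 * b, +oo[], where [odd_zeta_dist_le] applies. *)
move=> x1; set b := (x - 1) / 4; set L := (1 + b^-1) / b.
have b0 : 0 < b by rewrite divr_gt0 // subr_gt0.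
have L0 : 0 < L by rewrite divr_gt0 // ltr_wpDr // invr_ge0 ltW.
apply/cvgrPdist_le => e e0; apply/nbhs_ballP.
exists (Num.min (2 * b) (e / L)).
  by rewrite /= lt_min; apply/andP; split; [exact: mulr_gt0 | exact: divr_gt0].
move=> t; rewrite /ball_ /= lt_min => /andP[xt_b xt_e].
have xb : 1 + 2 * b <= x by rewrite /b; lra.
have tb : 1 + 2 * b <= t by move: xt_b; rewrite ltr_distlC /b => /andP[+ _]; lra.
apply: le_trans (odd_zeta_dist_le b0 xb tb) _.
by rewrite mulrC -ler_pdivlMr //; exact: ltW.
Qed.

Lemma odd_zeta_surjective (c : R) : 1 < c -> exists2 s, 1 < s & odd_zeta s = c.
Proof.
move=> c1; have [lo lo1 lo_ge] := odd_zeta_unbounded (lt_trans ltr01 c1).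
set d := 2 / (c - 1); set hi := lo + d.
have d0 : 0 < d by rewrite divr_gt0 // subr_gt0.
have lo_hi : lo <= hi by rewrite lerDl ltW.
have hi1 : 1 < hi := lt_le_trans lo1 lo_hi.
have hi_le : odd_zeta hi <= c.
  apply: le_trans (odd_zeta_le hi1) _.
  have : (hi - 1)^-1 <= d^-1 by rewrite lef_pV2 ?posrE ?subr_gt0 // /hi; lra.
  by rewrite invf_div; lra.
have cont : {within `[lo, hi], continuous odd_zeta}.
  apply: continuous_in_subspaceT => t; rewrite inE /= in_itv /= => /andP[lo_t _].
  exact: odd_zeta_continuous (lt_le_trans lo1 lo_t).
have [|s] := IVT lo_hi cont (v := c).
  by rewrite ge_min le_max hi_le lo_ge orbT.
rewrite in_itv /= => /andP[lo_s _] Os; exists s => //; exact: lt_le_trans lo1 lo_s.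
Qed.

Lemma odd_zeta_inj (x y : R) : 1 < x -> 1 < y -> odd_zeta x = odd_zeta y -> x = y.
Proof.
move=> x1 y1 Oxy; case: (ltgtP x y) => // [xy|yx].
  by have := odd_zeta_lt x1 xy; rewrite Oxy ltxx.
by have := odd_zeta_lt y1 yx; rewrite Oxy ltxx.
Qed.

End OddZeta.

Lemma uniq_sub_ler_sum (R : numDomainType) (I : eqType) (s t : seq I) (F : I -> R) :
  uniq s -> uniq t -> {subset s <= t} -> (forall i, 0 <= F i) ->
  \sum_(i <- s) F i <= \sum_(i <- t) F i.
Proof.
move=> s_uniq t_uniq st F_ge0; rewrite [leRHS](bigID (mem s)) /=.
have -> : \sum_(i <- t | i \in s) F i = \sum_(i <- s) F i.
  rewrite -big_filter; apply: perm_big; apply: uniq_perm => //; first exact: filter_uniq.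
  by move=> i; rewrite mem_filter andb_idr //; exact: st.
by rewrite lerDl sumr_ge0.
Qed.

Lemma sum_proper_divisors_le (R : numDomainType) (F : nat -> R) n :
  (0 < n)%N -> (forall k, 0 <= F k) ->
  \sum_(d <- divisors n | d != n) F (n %/ d)%N <= \sum_(2 <= k < n.+1) F k.
Proof.
move=> n_gt0 F_ge0; rewrite -big_filter -(big_map (divn n) xpredT).
apply: uniq_sub_ler_sum => //.
- rewrite map_inj_in_uniq ?filter_uniq ?divisors_uniq //.
  move=> d1 d2; rewrite !mem_filter -!dvdn_divisors // => /andP[_ d1_dvd] /andP[_ d2_dvd] eq_q.
  by rewrite -[d1](mulKn _ n_gt0) -divnA // eq_q divnA // mulKn.
- exact: iota_uniq.
move=> k /mapP[d]; rewrite mem_filter -dvdn_divisors // => /andP[d_neq d_dvd] ->.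
rewrite mem_index_iota ltnS leq_div andbT.
have := divnK d_dvd; case: (n %/ d)%N => [|[|q]] //; rewrite ?mul0n ?mul1n => n_eq.
  by rewrite -n_eq in n_gt0.
by rewrite n_eq eqxx in d_neq.
Qed.

Lemma powR_divn_mul (R : realType) (a : R) n d : (0 < n)%N -> (d %| n)%N ->
  n%:R `^ a * (n %/ d)%:R `^ (- a) = d%:R `^ a.
Proof.
move=> n_gt0 d_dvd; have d_gt0 := dvdn_gt0 n_gt0 d_dvd.
have q_gt0 : (0 < n %/ d)%N by rewrite divn_gt0 // dvdn_leq.
rewrite -{1}(divnK d_dvd) natrM powRM // powRN mulrAC mulfV ?mul1r //.
by rewrite powR_eq0 pnatr_eq0 (gtn_eqF q_gt0).
Qed.

Section DirichletInverse.
Context {R : realType} (f g : nat -> R).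
Hypotheses (f1 : f 1%N = 1) (fg : is_dirichlet_inverse f g).

Lemma dirichlet_inverse1 : g 1%N = 1.
Proof.
have := fg (ltn0Sn 0); rewrite (_ : divisors 1 = [:: 1%N]) //.
by rewrite big_seq1 divn1 f1 mul1r /dir_eps eqxx.
Qed.

Lemma dirichlet_inverse_rec n : (1 < n)%N ->
  g n = - \sum_(d <- divisors n | d != n) f (n %/ d)%N * g d.
Proof.
move=> n_gt1; have n_gt0 := ltnW n_gt1.
have := fg n_gt0; rewrite (bigD1_seq n) ?divisors_id ?divisors_uniq //=.
by rewrite divnn n_gt0 f1 mul1r /dir_eps gtn_eqF // => /eqP; rewrite addr_eq0 => /eqP.
Qed.

Lemma dirichlet_inverse_le_powR (a : R) :
  (forall n, (1 < n)%N -> \sum_(2 <= k < n.+1) `|f k| * k%:R `^ (- a) <= 1) ->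
  forall n, (0 < n)%N -> `|g n| <= n%:R `^ a.
Proof.
move=> f_sum; elim/ltn_ind => n IH n_gt0.
have [n_le1|n_gt1] := leqP n 1.
  have -> : n = 1%N by apply/eqP; rewrite eqn_leq n_le1.
  by rewrite dirichlet_inverse1 normr1 powR1.
rewrite dirichlet_inverse_rec // normrN; apply: (le_trans (ler_norm_sum _ _ _)).
apply: (@le_trans _ _ (\sum_(d <- divisors n | d != n)
    n%:R `^ a * (`|f (n %/ d)%N| * (n %/ d)%:R `^ (- a)))).
  rewrite big_seq_cond [leRHS]big_seq_cond; apply: ler_sum => d /andP[].
  rewrite -dvdn_divisors // => d_dvd d_neq.
  have d_lt : (d < n)%N by rewrite ltn_neqAle d_neq dvdn_leq.
  (* [d `^ a = n `^ a * (n %/ d) `^ (- a)] pulls [n `^ a] out of the sum. *)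
  rewrite normrM mulrCA powR_divn_mul //; apply: ler_wpM2l => //.
  exact: IH (dvdn_gt0 n_gt0 d_dvd).
rewrite -mulr_sumr -[leRHS]mulr1; apply: ler_wpM2l; first exact: powR_ge0.
apply: le_trans (f_sum n n_gt1).
by apply: sum_proper_divisors_le => // k; rewrite mulr_ge0 ?powR_ge0.
Qed.

End DirichletInverse.

Lemma odd_bounded_sum_le (R : realType) (f : nat -> R) (C gamma s : R) N :
  (forall n, (0 < n)%N -> ~~ odd n -> f n = 0) ->
  (forall n, (2 <= n)%N -> `|f n| <= C * n%:R `^ gamma) ->
  \sum_(2 <= k < N) `|f k| * k%:R `^ (- (gamma + s)) <= C * \sum_(2 <= k < N) odd_zeta_term s k.
Proof.
move=> f_even f_le; rewrite mulr_sumr; apply: ler_sum_nat => k /andP[k_ge2 _].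
have k_gt0 : (0 < k)%N := ltnW k_ge2.
rewrite /odd_zeta_term; case: ifP => [_|/negbT k_even].
  apply: le_trans (ler_wpM2r (powR_ge0 _ _) (f_le k k_ge2)) _.
  rewrite /zeta_term -mulrA -powRD ?pnatr_eq0 ?(gtn_eqF k_gt0) ?implybT //.
  by have -> : gamma + - (gamma + s) = - s by ring.
by rewrite f_even // normr0 mul0r mulr0.
Qed.

Theorem proposition3p17 (R : realType) (f finv : nat -> R) (C gamma : R) :
  f 1%N = 1 ->
  (forall n : nat, (0 < n)%N -> ~~ odd n -> f n = 0) ->
  0 < C ->
  (forall n : nat, (2 <= n)%N -> `|f n| <= C * (n%:R `^ gamma)) ->
  is_dirichlet_inverse f finv ->
  (exists! s : R, 1 < s /\ (1 - 2 `^ (- s)) * zeta s = C^-1 + 1) /\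
  (forall s : R, 1 < s -> (1 - 2 `^ (- s)) * zeta s = C^-1 + 1 ->
     forall n : nat, (2 <= n)%N -> `|finv n| <= n%:R `^ (gamma + s)).
Proof.
move=> f1 f_even C_gt0 f_le fg.
have c_gt1 : 1 < C^-1 + 1 by rewrite ltrDr invr_gt0.
split.
  have [s s_gt1 Os] := odd_zeta_surjective c_gt1.
  exists s; split=> // t [t_gt1 Ot].
  by apply: odd_zeta_inj => //; rewrite /odd_zeta Ot.
move=> s s_gt1 Os n n_ge2.
apply: (dirichlet_inverse_le_powR f1 fg) (ltnW n_ge2) => m m_gt1.
apply: le_trans (odd_bounded_sum_le s m.+1 f_even f_le) _.
rewrite -[leRHS](mulfV (lt0r_neq0 C_gt0)); apply: ler_wpM2l; first exact: ltW.
by have := odd_zeta_tail_le m.+1 s_gt1; rewrite /odd_zeta Os addrK.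
Qed.
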